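(* Let $\mu$ be a $\mathbb{B}$-module. The following are equivalent: (1) $\mu$ is projective; (2) $\mu$ is isomorphic to the free $\mathbb{B}$-module $\mathbb{B}(S,\leq)$ on some lower finite poset $(S,\leq)$; (3) $\mu$ has unique irredundant primitive decompositions, and the set $\mathrm{Prim}\,\mu$ of primitive elements of $\mu$, with the partial order induced from $\mu$, is lower finite.
   Context: $\mathbb{B}=\{-\infty,0\}$ is the Boolean semifield (idempotent semiring with addition $\vee=\max$). A $\mathbb{B}$-module is a set $\mu$ with an associative, commutative, idempotent operation $\vee$ having a neutral element $-\infty$; equivalently a poset ($x\le y$ iff $x\vee y=y$) with a least element and all finite joins. Homomorphisms preserve finite joins (including the empty join $-\infty$). The free $\mathbb{B}$-module on a set $S$ is the set of finite subsets of $S$ under union. A module is projective if every surjective homomorphism onto it admits a section (equivalently, it is a retract of a free module). For a poset $(S,\le)$, $\mathbb{B}(S,\le)$ is the set of lower subsets of $S$ which are the downward closure of a finite subset, with operation union; it is the free $\mathbb{B}$-module on the poset. A poset is lower finite if every principal lower set $S_{\le X}=\{Y\in S: Y\le X\}$ is finite. An element $X\in\mu$ is primitive if whenever $X=\bigvee_{i\in I}X_i$ with $I$ finite, then $X=X_i$ for some $i$ (so $-\infty$ is never primitive). An irredundant primitive decomposition of $X\in\mu$ is an expression $X=\bigvee F$ with $F$ a finite set of primitive elements that are pairwise incomparable. $\mu$ has unique irredundant primitive decompositions if every element of $\mu$ has exactly one irredundant primitive decomposition; equivalently, the map $\mathbb{B}(\mathrm{Prim}\,\mu,\le)\to\mu$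 sending the downward closure of a finite set $F$ to $\bigvee F$ is bijective. *)

(* B-modules (= join-semilattices with bottom) as a record. *)
From Stdlib Require Import List FunctionalExtensionality PropExtensionality ProofIrrelevance.
Import ListNotations.

Record bmodule := BModule {
  car :> Type;
  bjoin : car -> car -> car;
  bbot : car;
  bjoinA : forall x y z, bjoin x (bjoin y z) = bjoin (bjoin x y) z;
  bjoinC : forall x y, bjoin x y = bjoin y x;
  bjoinI : forall x, bjoin x x = x;
  bjoin0 : forall x, bjoin bbot x = x
}.

Arguments bjoin {b} _ _.
Arguments bbot {b}.

Definition bigjoin {M : bmodule} (l : list M) : M := fold_right bjoin bbot l.

Definition ble {M : bmodule} (x y : M) : Prop := bjoin x y = y.

Definition is_hom {M N : bmodule} (f : M -> N) : Prop :=
  (forall x y, f (bjoin x y) = bjoin (f x) (f y)) /\ f bbot = bbot.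

Definition surjective {A B : Type} (f : A -> B) : Prop := forall y, exists x, f x = y.

Definition projective (M : bmodule) : Prop :=
  forall (N : bmodule) (p : N -> M), is_hom p -> surjective p ->
    exists s : M -> N, is_hom s /\ forall x, p (s x) = x.

Definition isomorphic (M N : bmodule) : Prop :=
  exists (f : M -> N) (g : N -> M), is_hom f /\
    (forall x, g (f x) = x) /\ (forall y, f (g y) = y).

Record is_poset (S : Type) (le : S -> S -> Prop) : Prop := {
  po_refl : forall x, le x x;
  po_antisym : forall x y, le x y -> le y x -> x = y;
  po_trans : forall x y z, le x y -> le y z -> le x z
}.

Definition lower_finite (S : Type) (le : S -> S -> Prop) : Prop :=
  forall x, exists l : list S, forall y, le y x -> In y l.

(* B(S,<=): lower subsets of S that are the downward closure of a finite subset *)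
Definition fgl (S : Type) (le : S -> S -> Prop) : Type :=
  { A : S -> Prop | exists l : list S, forall x, A x <-> exists y, In y l /\ le x y }.

Lemma fgl_ext (S : Type) (le : S -> S -> Prop) (A B : fgl S le) :
  (forall x, proj1_sig A x <-> proj1_sig B x) -> A = B.
Proof.
  destruct A as [A HA], B as [B HB]; simpl; intro H.
  assert (A = B) by (apply functional_extensionality; intro x;
                     apply propositional_extensionality; apply H).
  subst B. f_equal. apply proof_irrelevance.
Qed.

Definition fgl_join (S : Type) (le : S -> S -> Prop) (A B : fgl S le) : fgl S le.
Proof.
  refine (exist _ (fun x => proj1_sig A x \/ proj1_sig B x) _).
  destruct (proj2_sig A) as [l1 H1], (proj2_sig B) as [l2 H2].
  exists (l1 ++ l2); intro x; rewrite H1, H2; split.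
  - intros [[y [Hy Hl]]|[y [Hy Hl]]]; exists y; split; auto; apply in_or_app; auto.
  - intros [y [Hy Hl]]; apply in_app_or in Hy as [Hy|Hy]; [left|right]; exists y; auto.
Defined.

Definition fgl_bot (S : Type) (le : S -> S -> Prop) : fgl S le.
Proof.
  refine (exist _ (fun _ => False) _).
  exists []; intro x; split; [contradiction|intros [y [[] _]]].
Defined.

Definition freeB (S : Type) (le : S -> S -> Prop) : bmodule.
Proof.
  refine (@BModule (fgl S le) (@fgl_join S le) (fgl_bot S le) _ _ _ _);
  intros; apply fgl_ext; simpl; tauto.
Defined.

Definition primitive {M : bmodule} (X : M) : Prop :=
  forall l : list M, X = bigjoin l -> exists Y, In Y l /\ X = Y.

Definition irr_prim_decomp {M : bmodule} (X : M) (F : list M) : Prop :=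
  (forall Y, In Y F -> primitive Y) /\
  (forall Y Z, In Y F -> In Z F -> ble Y Z -> Y = Z) /\
  X = bigjoin F.

Definition unique_irr_prim_decomp (M : bmodule) : Prop :=
  forall X : M, (exists F, irr_prim_decomp X F) /\
    (forall F F', irr_prim_decomp X F -> irr_prim_decomp X F' ->
       forall Y, In Y F <-> In Y F').

Definition prim_lower_finite (M : bmodule) : Prop :=
  forall X : M, primitive X ->
    exists l : list M, forall Y, primitive Y -> ble Y X -> In Y l.

(** A lower finite poset makes every element of B(S,<=) a finite union of principal
    ideals, so a section of a surjection onto B(S,<=) is obtained by lifting the
    principal ideals one by one; projectivity passes along isomorphisms.
    Conversely, a section s of the canonical surjection from finite subsets of M onto M
    makes M lower finite (an element below x is the join of a subset of the finite set
    s x) and every primitive x join-prime (x lies in s x).  By well-founded induction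
    every element is then a join of primitives, and join-primality makes irredundant
    primitive decompositions unique.  Finally, under unique decompositions a primitive
    below the join of an antichain G of primitives but below no element of G could be
    added to G to give a second decomposition; so primitives are join-prime, and
    x |-> {p primitive | p <= x} is an isomorphism onto B(Prim M, <=). *)

From Stdlib Require Import List Wf_nat Classical ClassicalEpsilon ProofIrrelevance.
Import ListNotations.

Section Order.
Context {M : bmodule}.
Implicit Types x y z : M.
Implicit Types l : list M.

Lemma ble_refl x : ble x x.
Proof. apply bjoinI. Qed.

Lemma ble_antisym x y : ble x y -> ble y x -> x = y.
Proof. unfold ble; intros Hxy Hyx. rewrite <- Hyx, bjoinC. exact Hxy. Qed.

Lemma ble_trans x y z : ble x y -> ble y z -> ble x z.
Proof. unfold ble; intros Hxy Hyz. rewrite <- Hyz, bjoinA, Hxy. reflexivity. Qed.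

Lemma ble_is_poset : is_poset M ble.
Proof. split; [exact ble_refl | exact ble_antisym | exact ble_trans]. Qed.

Lemma ble_joinl x y : ble x (bjoin x y).
Proof. unfold ble. rewrite bjoinA, bjoinI. reflexivity. Qed.

Lemma ble_joinr x y : ble y (bjoin x y).
Proof. rewrite bjoinC. apply ble_joinl. Qed.

Lemma join_lub x y z : ble x z -> ble y z -> ble (bjoin x y) z.
Proof. unfold ble; intros Hx Hy. rewrite <- bjoinA, Hy. exact Hx. Qed.

Lemma ble_bot x : ble bbot x.
Proof. apply bjoin0. Qed.

Lemma ble_bot_eq x : ble x bbot -> x = bbot.
Proof. intro H. apply ble_antisym; [exact H | apply ble_bot]. Qed.

Lemma bigjoin1 x : bigjoin [x] = x.
Proof. unfold bigjoin; simpl. rewrite bjoinC. apply bjoin0. Qed.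

Lemma bigjoin_app l1 l2 : bigjoin (l1 ++ l2) = bjoin (bigjoin l1) (bigjoin l2).
Proof.
  induction l1 as [|a l1 IH]; simpl.
  - symmetry. apply bjoin0.
  - unfold bigjoin in *; simpl. rewrite IH, bjoinA. reflexivity.
Qed.

Lemma bigjoin_ub l x : In x l -> ble x (bigjoin l).
Proof.
  induction l as [|a l IH]; intros Hx; [destruct Hx|].
  destruct Hx as [<- | Hx].
  - apply ble_joinl.
  - eapply ble_trans; [apply IH, Hx | apply ble_joinr].
Qed.

Lemma bigjoin_lub l z : (forall x, In x l -> ble x z) -> ble (bigjoin l) z.
Proof.
  induction l as [|a l IH]; intros Hl; [apply ble_bot|].
  apply join_lub; [apply Hl; left; reflexivity | apply IH; intros x Hx; apply Hl; right; exact Hx].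
Qed.

Lemma bigjoin_incl l1 l2 : incl l1 l2 -> ble (bigjoin l1) (bigjoin l2).
Proof. intros H. apply bigjoin_lub. intros x Hx. apply bigjoin_ub, H, Hx. Qed.

Lemma bigjoin_same_elements l1 l2 : (forall x, In x l1 <-> In x l2) -> bigjoin l1 = bigjoin l2.
Proof. intros H. apply ble_antisym; apply bigjoin_incl; intros x; apply H. Qed.

End Order.

Lemma hom_bigjoin {M N : bmodule} (p : M -> N) (l : list M) :
  is_hom p -> p (bigjoin l) = bigjoin (map p l).
Proof.
  intros [p_join p_bot]. induction l as [|a l IH]; [exact p_bot|].
  simpl. unfold bigjoin in *. simpl. rewrite p_join, IH. reflexivity.
Qed.

Definition filterP {A : Type} (P : A -> Prop) (l : list A) : list A :=
  filter (fun x => if excluded_middle_informative (P x) then true else false) l.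

Lemma in_filterP {A : Type} (P : A -> Prop) l x : In x (filterP P l) <-> In x l /\ P x.
Proof.
  unfold filterP. rewrite filter_In.
  destruct (excluded_middle_informative (P x)); intuition discriminate.
Qed.

Section Antichains.
Context {M : bmodule}.
Implicit Types x y a : M.
Implicit Types l G : list M.

Definition antichain l : Prop := forall x y, In x l -> In y l -> ble x y -> x = y.

Definition insert_top a G : list M := a :: filterP (fun g => ~ ble g a) G.

Lemma bigjoin_insert_top a G : bigjoin (insert_top a G) = bjoin a (bigjoin G).
Proof.
  apply ble_antisym.
  - apply join_lub; [apply ble_joinl|].
    eapply ble_trans; [|apply ble_joinr].
    apply bigjoin_incl. intros g Hg. apply in_filterP in Hg. apply Hg.
  - apply join_lub; [apply bigjoin_ub; left; reflexivity|].
    apply bigjoin_lub. intros g Hg. destruct (classic (ble g a)) as [Hga | Hga].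
    + eapply ble_trans; [exact Hga | apply bigjoin_ub; left; reflexivity].
    + apply bigjoin_ub. right. apply in_filterP. split; assumption.
Qed.

Lemma antichain_insert_top a G :
  antichain G -> (forall g, In g G -> ~ ble a g) -> antichain (insert_top a G).
Proof.
  intros HG Ha x y [<- | Hx] [<- | Hy] Hxy; try reflexivity.
  - apply in_filterP in Hy. exfalso. exact (Ha y (proj1 Hy) Hxy).
  - apply in_filterP in Hx. exfalso. exact (proj2 Hx Hxy).
  - apply in_filterP in Hx. apply in_filterP in Hy.
    exact (HG x y (proj1 Hx) (proj1 Hy) Hxy).
Qed.

Lemma antichain_sublist l :
  exists G, incl G l /\ antichain G /\ bigjoin G = bigjoin l.
Proof.
  induction l as [|a l (G & HGl & HG & EG)].
  - exists []. split; [apply incl_refl | split; [intros x y [] | reflexivity]].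
  - destruct (classic (exists g, In g G /\ ble a g)) as [(g & Hg & Hag) | Hno].
    + exists G. split; [intros x Hx; right; apply HGl, Hx | split; [exact HG|]].
      change (bigjoin (a :: l)) with (bjoin a (bigjoin l)). rewrite <- EG. symmetry.
      exact (ble_trans _ _ _ Hag (bigjoin_ub G g Hg)).
    + exists (insert_top a G). split; [|split].
      * intros x [<- | Hx]; [left; reflexivity|].
        right. apply HGl. apply in_filterP in Hx. apply Hx.
      * apply antichain_insert_top; [exact HG|].
        intros g Hg Hag. apply Hno. exists g. split; assumption.
      * rewrite bigjoin_insert_top, EG. reflexivity.
Qed.

End Antichains.

Definition strict {S : Type} (le : S -> S -> Prop) (x y : S) : Prop := le x y /\ x <> y.

Lemma lower_finite_well_founded (S : Type) (le : S -> S -> Prop) :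
  is_poset S le -> lower_finite S le -> well_founded (strict le).
Proof.
  intros PO LF x. destruct (LF x) as [l Hl].
  assert (Hlt : forall y, strict le y x -> In y l) by (intros y Hy; apply Hl, Hy).
  clear Hl. revert x Hlt.
  induction l as [l IH] using (well_founded_ind (well_founded_ltof _ (@length S))).
  intros x Hlt. constructor. intros y Hy.
  pose (eq_dec := fun a b : S => excluded_middle_informative (a = b)).
  apply (IH (remove eq_dec y l)); [apply remove_length_lt, Hlt, Hy|].
  intros z [Hzy Hzy']. apply in_in_remove; [exact Hzy'|]. apply Hlt. split.
  - exact (po_trans _ _ PO z y x Hzy (proj1 Hy)).
  - intros ->. apply Hzy'. exact (po_antisym _ _ PO _ _ Hzy (proj1 Hy)).
Qed.

Section Decompositions.
Context {M : bmodule}.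
Implicit Types x y a : M.
Implicit Types l F G : list M.

Lemma bot_not_primitive : ~ primitive (@bbot M).
Proof. intros H. destruct (H [] eq_refl) as (y & [] & _). Qed.

Definition decomposable x : Prop :=
  exists F, (forall y, In y F -> primitive y) /\ x = bigjoin F.

Lemma decomposable_bigjoin l : (forall x, In x l -> decomposable x) -> decomposable (bigjoin l).
Proof.
  induction l as [|a l IH]; intros Hl.
  - exists []. split; [intros y [] | reflexivity].
  - destruct (Hl a (or_introl eq_refl)) as (Fa & HFa & ->).
    destruct IH as (F & HF & EF); [intros x Hx; apply Hl; right; exact Hx|].
    exists (Fa ++ F). split.
    + intros y Hy. apply in_app_or in Hy as [Hy | Hy]; auto.
    + rewrite bigjoin_app, <- EF. reflexivity.
Qed.

Lemma lower_finite_decomposable : lower_finite M ble -> forall x, decomposable x.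
Proof.
  intros LF x.
  induction x as [x IH] using (well_founded_ind (lower_finite_well_founded _ _ ble_is_poset LF)).
  destruct (classic (primitive x)) as [Hx | Hx].
  - exists [x]. split; [intros y [<- | []]; exact Hx | symmetry; apply bigjoin1].
  - apply not_all_ex_not in Hx as [l Hl]. apply imply_to_and in Hl as [-> Hl].
    apply decomposable_bigjoin. intros y Hy. apply IH. split; [apply bigjoin_ub, Hy|].
    intros E. apply Hl. exists y. split; [exact Hy | symmetry; exact E].
Qed.

Definition join_prime x : Prop := forall l, ble x (bigjoin l) -> exists y, In y l /\ ble x y.

Lemma join_prime_join x a b : join_prime x -> ble x (bjoin a b) -> ble x a \/ ble x b.
Proof.
  intros Hx Hab. destruct (Hx [a; b]) as (y & [<- | [<- | []]] & Hy); auto.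
  unfold bigjoin; simpl. rewrite (bjoinC _ b bbot), bjoin0. exact Hab.
Qed.

Lemma join_prime_of_join x :
  x <> bbot -> (forall a b, ble x (bjoin a b) -> ble x a \/ ble x b) -> join_prime x.
Proof.
  intros Hbot Hjoin l. induction l as [|a l IH]; intros Hl.
  - exfalso. exact (Hbot (ble_bot_eq x Hl)).
  - destruct (Hjoin a (bigjoin l) Hl) as [Ha | Hl'].
    + exists a. split; [left; reflexivity | exact Ha].
    + destruct (IH Hl') as (y & Hy & Hxy). exists y. split; [right; exact Hy | exact Hxy].
Qed.

Lemma irr_prim_decomp_incl X F F' :
  (forall x, primitive x -> join_prime x) ->
  irr_prim_decomp X F -> irr_prim_decomp X F' -> incl F F'.
Proof.
  intros JP (PF & AF & EF) (PF' & AF' & EF') y Hy.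
  destruct (JP y (PF y Hy) F') as (z & Hz & Hyz).
  { rewrite <- EF', EF. apply bigjoin_ub, Hy. }
  destruct (JP z (PF' z Hz) F) as (y' & Hy' & Hzy').
  { rewrite <- EF, EF'. apply bigjoin_ub, Hz. }
  assert (y = y') as <- by exact (AF y y' Hy Hy' (ble_trans _ _ _ Hyz Hzy')).
  rewrite (ble_antisym y z Hyz Hzy'). exact Hz.
Qed.

Lemma unique_irr_prim_decomp_of_join_prime :
  lower_finite M ble -> (forall x, primitive x -> join_prime x) -> unique_irr_prim_decomp M.
Proof.
  intros LF JP X. split.
  - destruct (lower_finite_decomposable LF X) as (F & PF & EF).
    destruct (antichain_sublist F) as (G & HGF & AG & EG).
    exists G. split; [intros y Hy; apply PF, HGF, Hy | split; [exact AG | congruence]].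
  - intros F F' HF HF' y. split; apply irr_prim_decomp_incl with X; assumption.
Qed.

End Decompositions.

Section FreeModule.
Context {S : Type} {le : S -> S -> Prop}.

Lemma principal_generated (a : S) :
  exists l, forall x, le x a <-> exists y, In y l /\ le x y.
Proof.
  exists [a]. intros x. split.
  - intros H. exists a. split; [left; reflexivity | exact H].
  - intros (y & [<- | []] & H). exact H.
Qed.

Definition principal (a : S) : freeB S le := exist _ (fun x => le x a) (principal_generated a).

Lemma in_bigjoin_free (l : list (freeB S le)) x :
  proj1_sig (bigjoin l) x <-> exists A, In A l /\ proj1_sig A x.
Proof.
  induction l as [|A l IH]; simpl.
  - split; [intros [] | intros (B & [] & _)].
  - rewrite IH. split.
    + intros [H | (B & HB & H)]; [exists A | exists B]; auto.
    + intros (B & [<- | HB] & H); [left | right; exists B]; auto.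
Qed.

Lemma fgl_down_closed (A : fgl S le) x y :
  is_poset S le -> le x y -> proj1_sig A y -> proj1_sig A x.
Proof.
  intros PO Hxy Hy. destruct A as [A [l Hl]]; simpl in *.
  apply Hl in Hy as (z & Hz & Hyz). apply Hl. exists z. split; [exact Hz|].
  exact (po_trans _ _ PO _ _ _ Hxy Hyz).
Qed.

Lemma fgl_finite (A : fgl S le) :
  lower_finite S le -> exists l, forall x, proj1_sig A x <-> In x l.
Proof.
  intros LF. destruct A as [A [gens Hgens]]; simpl.
  assert (Hcover : exists L, forall x, A x -> In x L).
  { setoid_rewrite Hgens. clear Hgens. induction gens as [|a gens (L & HL)].
    - exists []. intros x (y & [] & _).
    - destruct (LF a) as [La HLa]. exists (La ++ L).
      intros x (y & [<- | Hy] & Hxy); apply in_or_app.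
      + left. apply HLa, Hxy.
      + right. apply HL. exists y. split; assumption. }
  destruct Hcover as [L HL]. exists (filterP A L).
  intros x. rewrite in_filterP. split; [|apply proj2].
  intros Hx. split; [apply HL, Hx | exact Hx].
Qed.

Hypothesis LF : lower_finite S le.

Definition fgl_enum (A : fgl S le) : list S :=
  proj1_sig (constructive_indefinite_description _ (fgl_finite A LF)).

Lemma in_fgl_enum (A : fgl S le) x : In x (fgl_enum A) <-> proj1_sig A x.
Proof.
  unfold fgl_enum. destruct (constructive_indefinite_description _ _) as [l Hl]. simpl.
  symmetry. apply Hl.
Qed.

Definition free_ext {N : bmodule} (c : S -> N) (A : freeB S le) : N :=
  bigjoin (map c (fgl_enum A)).

Lemma free_ext_hom {N : bmodule} (c : S -> N) : is_hom (free_ext c).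
Proof.
  split.
  - intros A B. unfold free_ext. rewrite <- bigjoin_app, <- map_app.
    apply bigjoin_same_elements. intros y. rewrite !in_map_iff.
    setoid_rewrite in_app_iff. setoid_rewrite in_fgl_enum. reflexivity.
  - unfold free_ext. destruct (fgl_enum _) as [|x l] eqn:E; [reflexivity|].
    assert (Hx : In x (fgl_enum (bbot : freeB S le))) by (rewrite E; left; reflexivity).
    apply in_fgl_enum in Hx. destruct Hx.
Qed.

Lemma hom_free_ext {N N' : bmodule} (p : N -> N') (c : S -> N) A :
  is_hom p -> p (free_ext c A) = free_ext (fun a => p (c a)) A.
Proof.
  intros Hp. unfold free_ext. rewrite hom_bigjoin by exact Hp. rewrite map_map. reflexivity.
Qed.

Lemma free_ext_principal A : is_poset S le -> free_ext principal A = A.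
Proof.
  intros PO. apply fgl_ext. intros x. unfold free_ext.
  rewrite in_bigjoin_free. setoid_rewrite in_map_iff. split.
  - intros (B & (y & <- & Hy) & Hxy). apply in_fgl_enum in Hy.
    exact (fgl_down_closed A x y PO Hxy Hy).
  - intros Hx. exists (principal x). split.
    + exists x. split; [reflexivity | apply in_fgl_enum, Hx].
    + exact (po_refl _ _ PO x).
Qed.

Lemma free_projective : is_poset S le -> projective (freeB S le).
Proof.
  intros PO N p Hp Hsurj.
  destruct (choice (fun a n => p n = principal a) (fun a => Hsurj (principal a))) as [c Hc].
  exists (free_ext c). split; [apply free_ext_hom|].
  intros A. rewrite hom_free_ext by exact Hp.
  transitivity (free_ext principal A); [unfold free_ext; f_equal; apply map_ext, Hc|].
  apply free_ext_principal, PO.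
Qed.

End FreeModule.

Lemma projective_transport (M N : bmodule) (f : M -> N) (g : N -> M) :
  is_hom f -> (forall x, g (f x) = x) -> (forall y, f (g y) = y) ->
  projective N -> projective M.
Proof.
  intros [f_join f_bot] gf fg HN P p [p_join p_bot] Hsurj.
  destruct (HN P (fun n => f (p n))) as (s & [s_join s_bot] & Hs).
  - split; [intros x y; rewrite p_join, f_join; reflexivity | rewrite p_bot, f_bot; reflexivity].
  - intros y. destruct (Hsurj (g y)) as [n Hn]. exists n. rewrite Hn, fg. reflexivity.
  - exists (fun x => s (f x)). split; [split|].
    + intros x y. rewrite f_join, s_join. reflexivity.
    + rewrite f_bot, s_bot. reflexivity.
    + intros x. rewrite <- (gf (p (s (f x)))), Hs, gf. reflexivity.
Qed.

Fixpoint sublists {A : Type} (l : list A) : list (list A) :=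
  match l with
  | [] => [[]]
  | a :: l => map (cons a) (sublists l) ++ sublists l
  end.

Lemma filter_in_sublists {A : Type} (f : A -> bool) l : In (filter f l) (sublists l).
Proof.
  induction l as [|a l IH]; simpl; [left; reflexivity|].
  apply in_or_app. destruct (f a); [left; apply in_map | right]; exact IH.
Qed.

Lemma eq_lower_finite (S : Type) : lower_finite S eq.
Proof. intros x. exists [x]. intros y ->. left. reflexivity. Qed.

Definition free_sum (M : bmodule) : freeB M eq -> M :=
  free_ext (eq_lower_finite M) (fun x => x).

Lemma free_sum_surjective (M : bmodule) : surjective (free_sum M).
Proof.
  intros x. exists (principal x). unfold free_sum, free_ext. rewrite map_id.
  transitivity (bigjoin [x]); [|apply bigjoin1].
  apply bigjoin_same_elements. intros y. rewrite in_fgl_enum. simpl. intuition.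
Qed.

Section ProjectiveModule.
Context {M : bmodule}.
Variable s : M -> freeB M eq.
Hypotheses (s_hom : is_hom s) (s_section : forall x, free_sum M (s x) = x).
Implicit Types x y z : M.

Lemma section_spec x : x = bigjoin (fgl_enum (eq_lower_finite M) (s x)).
Proof. rewrite <- (s_section x) at 1. unfold free_sum, free_ext. rewrite map_id. reflexivity. Qed.

Lemma section_below x z : proj1_sig (s x) z -> ble z x.
Proof. intros Hz. rewrite (section_spec x). apply bigjoin_ub, in_fgl_enum, Hz. Qed.

Lemma section_monotone x y z : ble x y -> proj1_sig (s x) z -> proj1_sig (s y) z.
Proof.
  intros Hxy Hz. unfold ble in Hxy. rewrite <- Hxy, (proj1 s_hom). simpl. left. exact Hz.
Qed.

Lemma section_primitive x : primitive x -> proj1_sig (s x) x.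
Proof.
  intros Hx. destruct (Hx _ (section_spec x)) as (y & Hy & ->). rewrite <- in_fgl_enum. exact Hy.
Qed.

Lemma section_bigjoin l z :
  proj1_sig (s (bigjoin l)) z -> exists y, In y l /\ proj1_sig (s y) z.
Proof.
  rewrite hom_bigjoin, in_bigjoin_free by exact s_hom.
  intros (A & HA & Hz). apply in_map_iff in HA as (y & <- & Hy). exists y. split; assumption.
Qed.

Lemma section_lower_finite : lower_finite M ble.
Proof.
  intros x. set (L := fgl_enum (eq_lower_finite M) (s x)).
  exists (map bigjoin (sublists L)). intros y Hyx. apply in_map_iff.
  exists (filterP (proj1_sig (s y)) L). split; [|apply filter_in_sublists].
  rewrite (section_spec y) at 2. apply bigjoin_same_elements. intros z.
  rewrite in_filterP, !in_fgl_enum. split; [apply proj2|].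
  intros Hz. split; [apply in_fgl_enum, (section_monotone y x z Hyx Hz) | exact Hz].
Qed.

Lemma section_join_prime x : primitive x -> join_prime x.
Proof.
  intros Hx l Hl. destruct (section_bigjoin l x) as (y & Hy & Hxy).
  - exact (section_monotone _ _ _ Hl (section_primitive x Hx)).
  - exists y. split; [exact Hy | exact (section_below y x Hxy)].
Qed.

End ProjectiveModule.

Lemma projective_unique_irr_prim_decomp (M : bmodule) :
  projective M -> unique_irr_prim_decomp M /\ prim_lower_finite M.
Proof.
  intros HM.
  destruct (HM _ (free_sum M) (free_ext_hom _ _) (free_sum_surjective M))
    as (s & s_hom & s_section).
  pose proof (section_lower_finite s s_hom s_section) as LF.
  split.
  - exact (unique_irr_prim_decomp_of_join_prime LF (section_join_prime s s_hom s_section)).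
  - intros x _. destruct (LF x) as [l Hl]. exists l. intros y _. apply Hl.
Qed.

Section Subposet.
Context {S : Type} (le : S -> S -> Prop) (P : S -> Prop).

Definition sub_le (a b : {x | P x}) : Prop := le (proj1_sig a) (proj1_sig b).

Lemma sub_poset : is_poset S le -> is_poset {x | P x} sub_le.
Proof.
  intros PO. split; unfold sub_le.
  - intros a. apply (po_refl _ _ PO).
  - intros [a Ha] [b Hb] Hab Hba. simpl in *.
    destruct (po_antisym _ _ PO a b Hab Hba). f_equal. apply proof_irrelevance.
  - intros a b c. apply (po_trans _ _ PO).
Qed.

Definition lift_list (l : list S) : list {x | P x} :=
  flat_map (fun x => match excluded_middle_informative (P x) with
                     | left Hx => [exist P x Hx]
                     | right _ => [] end) l.

Lemma in_lift_list (a : {x | P x}) l : In a (lift_list l) <-> In (proj1_sig a) l.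
Proof.
  destruct a as [a Ha]. unfold lift_list. rewrite in_flat_map. simpl. split.
  - intros (x & Hx & Hin).
    destruct (excluded_middle_informative (P x)) as [Hx' | _]; [|destruct Hin].
    destruct Hin as [E | []]. injection E as ->. exact Hx.
  - intros Hin. exists a. split; [exact Hin|].
    destruct (excluded_middle_informative (P a)) as [Ha' | Hna]; [|contradiction].
    left. f_equal. apply proof_irrelevance.
Qed.

Lemma sub_lower_finite :
  (forall x, P x -> exists l, forall y, P y -> le y x -> In y l) -> lower_finite {x | P x} sub_le.
Proof.
  intros LF [x Hx]. destruct (LF x Hx) as [l Hl]. exists (lift_list l).
  intros [y Hy] Hyx. apply in_lift_list, Hl; assumption.
Qed.

End Subposet.

Definition Prim (M : bmodule) : Type := {x : M | primitive x}.

Definition prim_le {M : bmodule} : Prim M -> Prim M -> Prop := sub_le ble primitive.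

Section UniqueDecompositions.
Context {M : bmodule}.
Hypothesis U : unique_irr_prim_decomp M.
Implicit Types x y a b : M.
Implicit Types G : list M.

Lemma below_irr_prim_decomp x G :
  primitive x -> irr_prim_decomp (bigjoin G) G -> ble x (bigjoin G) ->
  exists g, In g G /\ ble x g.
Proof.
  intros Hx (PG & AG & _) HxG. apply NNPP. intros Hno.
  assert (Hnot : forall g, In g G -> ~ ble x g) by (intros g Hg Hxg; apply Hno; exists g; auto).
  assert (D : irr_prim_decomp (bigjoin G) (insert_top x G)).
  { split; [|split].
    - intros y [<- | Hy]; [exact Hx | apply PG; apply in_filterP in Hy; apply Hy].
    - exact (antichain_insert_top x G AG Hnot).
    - rewrite bigjoin_insert_top. symmetry. exact HxG. }
  assert (HxinG : In x G).
  { apply (proj2 (U (bigjoin G)) _ _ D (conj PG (conj AG eq_refl))). left. reflexivity. }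
  exact (Hnot x HxinG (ble_refl x)).
Qed.

Lemma unique_decomp_join_prime x : primitive x -> join_prime x.
Proof.
  intros Hx. apply join_prime_of_join.
  { intros ->. exact (bot_not_primitive Hx). }
  intros a b Hab.
  destruct (proj1 (U a)) as (Ga & PGa & _ & ->), (proj1 (U b)) as (Gb & PGb & _ & ->).
  destruct (antichain_sublist (Ga ++ Gb)) as (G & HG & AG & EG).
  rewrite <- bigjoin_app, <- EG in Hab.
  destruct (below_irr_prim_decomp x G Hx) as (g & Hg & Hxg); [|exact Hab|].
  - split; [|split; [exact AG | reflexivity]].
    intros y Hy. apply HG, in_app_or in Hy as [Hy | Hy]; auto.
  - apply HG, in_app_or in Hg as [Hg | Hg]; [left | right];
      (eapply ble_trans; [exact Hxg | apply bigjoin_ub, Hg]).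
Qed.

Lemma prim_below_generated x :
  exists l, forall p : Prim M, ble (proj1_sig p) x <-> exists q, In q l /\ prim_le p q.
Proof.
  destruct (proj1 (U x)) as (G & PG & _ & EG). exists (lift_list primitive G).
  intros [p Hp]. unfold prim_le, sub_le. simpl. split.
  - intros Hpx. rewrite EG in Hpx.
    destruct (unique_decomp_join_prime p Hp G Hpx) as (g & Hg & Hpg).
    exists (exist _ g (PG g Hg)). split; [apply in_lift_list, Hg | exact Hpg].
  - intros ([q Hq] & Hin & Hpq). apply in_lift_list in Hin. simpl in *.
    eapply ble_trans; [exact Hpq|]. rewrite EG. apply bigjoin_ub, Hin.
Qed.

Definition prim_below x : freeB (Prim M) prim_le :=
  exist _ (fun p => ble (proj1_sig p) x) (prim_below_generated x).

Lemma prim_below_hom : is_hom prim_below.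
Proof.
  split.
  - intros x y. apply fgl_ext. intros [p Hp]. simpl. split.
    + apply join_prime_join, unique_decomp_join_prime, Hp.
    + intros [Hpx | Hpy].
      * exact (ble_trans _ _ _ Hpx (ble_joinl x y)).
      * exact (ble_trans _ _ _ Hpy (ble_joinr x y)).
  - apply fgl_ext. intros [p Hp]. simpl. split; [|intros []].
    intros Hpbot. rewrite (ble_bot_eq p Hpbot) in Hp. exact (bot_not_primitive Hp).
Qed.

Hypothesis PLF : prim_lower_finite M.

Lemma prim_le_lower_finite : lower_finite (Prim M) prim_le.
Proof. apply sub_lower_finite, PLF. Qed.

Definition prim_sum : freeB (Prim M) prim_le -> M :=
  free_ext prim_le_lower_finite (@proj1_sig _ _).

Lemma prim_sum_below x : prim_sum (prim_below x) = x.
Proof.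
  apply ble_antisym.
  - apply bigjoin_lub. intros y Hy. apply in_map_iff in Hy as (p & <- & Hp).
    apply in_fgl_enum in Hp. exact Hp.
  - destruct (proj1 (U x)) as (G & PG & _ & EG). rewrite EG at 1. apply bigjoin_lub.
    intros g Hg. apply bigjoin_ub, in_map_iff. exists (exist _ g (PG g Hg)).
    split; [reflexivity|]. apply in_fgl_enum. simpl. rewrite EG. apply bigjoin_ub, Hg.
Qed.

Lemma prim_below_sum A : prim_below (prim_sum A) = A.
Proof.
  apply fgl_ext. intros p. simpl. unfold prim_sum, free_ext. split.
  - intros Hp. destruct (unique_decomp_join_prime _ (proj2_sig p) _ Hp) as (y & Hy & Hpy).
    apply in_map_iff in Hy as (q & <- & Hq). apply in_fgl_enum in Hq.
    exact (fgl_down_closed A p q (sub_poset ble primitive ble_is_poset) Hpy Hq).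
  - intros Hp. apply bigjoin_ub, in_map, in_fgl_enum, Hp.
Qed.

End UniqueDecompositions.

Lemma free_of_unique_irr_prim_decomp (M : bmodule) :
  unique_irr_prim_decomp M -> prim_lower_finite M ->
  exists (S : Type) (le : S -> S -> Prop),
    is_poset S le /\ lower_finite S le /\ isomorphic M (freeB S le).
Proof.
  intros U PLF. exists (Prim M), prim_le.
  split; [exact (sub_poset ble primitive ble_is_poset)|].
  split; [exact (prim_le_lower_finite PLF)|].
  exists (prim_below U), (prim_sum PLF).
  split; [exact (prim_below_hom U) | split; [apply prim_sum_below | apply prim_below_sum]].
Qed.

Theorem mainTheorem1 (M : bmodule) :
  (projective M <->
     exists (S : Type) (le : S -> S -> Prop),
       is_poset S le /\ lower_finite S le /\ isomorphic M (freeB S le)) /\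
  ((exists (S : Type) (le : S -> S -> Prop),
       is_poset S le /\ lower_finite S le /\ isomorphic M (freeB S le)) <->
     unique_irr_prim_decomp M /\ prim_lower_finite M).
Proof.
  assert (free_projective_M : (exists (S : Type) (le : S -> S -> Prop),
      is_poset S le /\ lower_finite S le /\ isomorphic M (freeB S le)) -> projective M).
  { intros (S & le & PO & LF & f & g & Hf & gf & fg).
    exact (projective_transport M (freeB S le) f g Hf gf fg (free_projective LF PO)). }
  assert (unique_free_M : unique_irr_prim_decomp M /\ prim_lower_finite M ->
      exists (S : Type) (le : S -> S -> Prop),
        is_poset S le /\ lower_finite S le /\ isomorphic M (freeB S le)).
  { intros [U PLF]. exact (free_of_unique_irr_prim_decomp M U PLF). }
  split; split.
  - intros HM. apply unique_free_M, projective_unique_irr_prim_decomp, HM.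
  - exact free_projective_M.
  - intros HM. apply projective_unique_irr_prim_decomp, free_projective_M, HM.
  - exact unique_free_M.
Qed.
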